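(* Consider problem (P2) without the short-term power constraint, i.e., maximize $\mathbb{E}[R_\nu(P_\nu,\rho_\nu)]$ over policy pairs with $P_\nu\ge0$, $0\le\rho_\nu\le1$, subject to $\mathbb{E}[Q^{\rm NL}_\nu(P_\nu,\rho_\nu)]\ge Q$ and $\mathbb{E}[P_\nu]\le P_{\rm avg}$ (with $Q$ feasible). Given $\lambda,\mu>0$, let $Z(x)=\frac{1-\Omega}{P_sTax}$, $x_1=\frac{4\mu(1-\Omega)}{\lambda P_sTa}$, $x_2=\frac{\mu}{\lambda\Omega P_sTa}$ (so $x_2>x_1$), and for $h_\nu\ge x_1$ let $P^A_{{\rm o},\nu}=\frac1{h_\nu}\Big(-\frac1a\ln\Big(\frac{2}{1+\sqrt{1-4\mu Z(h_\nu)/\lambda}}-1\Big)+b\Big)$. Define $P'_{{\rm ID},\nu}=\max\{1/\mu-\sigma^2/h_\nu,0\}$ and $P'_{{\rm EH},\nu}=0$ if $h_\nu\le x_1$; $P'_{{\rm EH},\nu}=P^A_{{\rm o},\nu}$ if $x_1<h_\nu<x_2$ and $\lambda Q^{\rm NL}_\nu(P^A_{{\rm o},\nu},1)>\mu P^A_{{\rm o},\nu}$, and $0$ if $x_1<h_\nu<x_2$ otherwise; $P'_{{\rm EH},\nu}=P^A_{{\rm o},\nu}$ if $h_\nu\ge x_2$. Set $P_\nu=P'_{{\rm ID},\nu}+P'_{{\rm EH},\nu}$ and $\rho_\nu=0$ if $P_\nu=0$, $\rho_\nu=P'_{{\rm EH},\nu}/P_\nu$ otherwise. If $\lambda=\lambda^{\rm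 NL}>0$, $\mu=\mu^{\rm NL}>0$ are such that $\mathbb{E}[Q^{\rm NL}_\nu(P_\nu,\rho_\nu)]=Q$ and $\mathbb{E}[P_\nu]=P_{\rm avg}$, then $(P_\nu,\rho_\nu)$ is an optimal solution of this problem.
   Context: Standing model: constants $a,b,P_s,T,\sigma^2>0$ are fixed and $\Omega=1/(1+e^{ab})$. Fading is modeled on a probability space carrying independent random variables $h$ (channel power gain, values in $(0,\infty)$, $\mathbb{E}[h]<\infty$) and $U$ (uniform on $[0,1]$). A fading state is $\nu=(h_\nu,U_\nu)$, distributed as $(h,U)$; $\mathbb{E}$ is expectation over the fading state. A policy is a Borel measurable function of the fading state. For a fading state with gain $h_\nu$, transmit power $p\ge0$ and power-splitting ratio $\rho\in[0,1]$: $R_\nu(p,\rho)=\ln\big(1+(1-\rho)h_\nu p/\sigma^2\big)$ (rate, in nats); $\Psi_\nu(p,\rho)=1/(1+e^{-a(\rho h_\nu p-b)})$; $Q^{\rm NL}_\nu(p,\rho)=P_sT(\Psi_\nu(p,\rho)-\Omega)/(1-\Omega)$ (harvested energy). $P_{\rm avg}>0$ is the average power limit and $Q\ge0$ the average energy threshold. *)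

From HB Require Import structures.
From mathcomp Require Import all_boot all_order all_algebra.
From mathcomp Require Import all_classical all_reals all_analysis.
Set Implicit Arguments. Unset Strict Implicit. Unset Printing Implicit Defensive.
Import Order.TTheory GRing.Theory Num.Theory.
Import numFieldNormedType.Exports.
Local Open Scope classical_set_scope.
Local Open Scope ring_scope.

Section model.
Context {R : realType}.

Definition Omg (a b : R) : R := (1 + expR (a * b))^-1.

(* R_nu(p,rho) = ln(1 + (1-rho) h p / sigma^2)  (nats) *)
Definition rate (sigma2 h p rho : R) : R := ln (1 + (1 - rho) * h * p / sigma2).

Definition Psi (a b h p rho : R) : R := (1 + expR (- (a * (rho * h * p - b))))^-1.

Definition QNL (a b Ps T h p rho : R) : R :=
  Ps * T * (Psi a b h p rho - Omg a b) / (1 - Omg a b).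

(* the candidate policy, as a function of the channel gain x = h_nu *)
Definition Zf (a b Ps T x : R) : R := (1 - Omg a b) / (Ps * T * a * x).
Definition x1 (a b Ps T lam mu : R) : R := 4 * mu * (1 - Omg a b) / (lam * Ps * T * a).
Definition x2 (a b Ps T lam mu : R) : R := mu / (lam * Omg a b * Ps * T * a).
Definition PA (a b Ps T lam mu x : R) : R :=
  x^-1 * (- a^-1 * ln (2 / (1 + Num.sqrt (1 - 4 * mu * Zf a b Ps T x / lam)) - 1) + b).
Definition PID (sigma2 mu x : R) : R := Num.max (mu^-1 - sigma2 / x) 0.
Definition PEH (a b Ps T lam mu x : R) : R :=
  if x <= x1 a b Ps T lam mu then 0
  else if x < x2 a b Ps T lam mu then
    (if mu * PA a b Ps T lam mu x < lam * QNL a b Ps T x (PA a b Ps T lam mu x) 1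
     then PA a b Ps T lam mu x else 0)
  else PA a b Ps T lam mu x.
Definition Pcand (a b Ps T sigma2 lam mu x : R) : R :=
  PID sigma2 mu x + PEH a b Ps T lam mu x.
Definition rhocand (a b Ps T sigma2 lam mu x : R) : R :=
  if Pcand a b Ps T sigma2 lam mu x == 0 then 0
  else PEH a b Ps T lam mu x / Pcand a b Ps T sigma2 lam mu x.

Context {d : measure_display} {Ox : measurableType d}.

Definition indep_rv (P : probability Ox R) (X Y : Ox -> R) : Prop :=
  forall A B : set R, measurable A -> measurable B ->
    P (X @^-1` A `&` Y @^-1` B) = (P (X @^-1` A) * P (Y @^-1` B))%E.

Definition uniform01 (P : probability Ox R) (U : Ox -> R) : Prop :=
  forall A : set R, measurable A ->
    P (U @^-1` A) = (@lebesgue_measure R) (A `&` `[0, 1]%classic).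

Definition fading_model (P : probability Ox R) (h U : Ox -> R) : Prop :=
  [/\ measurable_fun setT h, measurable_fun setT U, (forall w, 0 < h w),
      P.-integrable setT (EFin \o h) & (indep_rv P h U /\ uniform01 P U)].

(* expectation over the fading state nu = (h, U) of f(nu) *)
Definition Efad (P : probability Ox R) (h U : Ox -> R) (f : R * R -> R) : \bar R :=
  (\int[P]_w (f (h w, U w))%:E)%E.

Definition feasible (a b Ps T Pavg Q : R) (P : probability Ox R) (h U : Ox -> R)
    (p rho : R * R -> R) : Prop :=
  [/\ measurable_fun setT p /\ measurable_fun setT rho,
      (forall w, 0 <= p (h w, U w)),
      (forall w, 0 <= rho (h w, U w) <= 1),
      (Q%:E <= Efad P h U (fun s => QNL a b Ps T s.1 (p s) (rho s)))%E &
      (Efad P h U p <= Pavg%:E)%E].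

End model.

(* Weak Lagrangian duality. At every fading state the candidate maximises the
   Lagrangian [R + lam Q^NL - mu p] over [p >= 0], [0 <= rho <= 1]; integrating
   this pointwise inequality, and using that the candidate meets both constraints
   with equality, bounds the expected rate of any feasible policy by that of the
   candidate.
   Pointwise, the information power [u = (1 - rho) p] and the harvesting power
   [v = rho p] separate the Lagrangian into the water-filling term
   [ln (1 + h u / sigma^2) - mu u], maximised by [PID], and the harvesting term
   [lam Q^NL(v, 1) - mu v]. In [t = a (h v - b)] the latter is an increasing
   affine image of [logistic t - m t] with [m = mu Z(h) / lam]: for [m >= 1/4]
   it is nonincreasing, otherwise its interior local maximum is [PA], so the best
   harvesting power is [0] or [PA], as [PEH] selects. *)

From HB Require Import structures.
From mathcomp Require Import all_boot all_order all_algebra.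
From mathcomp Require Import all_classical all_reals all_analysis.
From mathcomp Require Import ring lra measurable_realfun.
Import Order.TTheory GRing.Theory Num.Theory.
Import numFieldNormedType.Exports.
Local Open Scope classical_set_scope.
Local Open Scope ring_scope.

Section logistic.
Context {R : realType}.

Definition logistic (t : R) : R := (1 + expR (- t))^-1.

Lemma logistic_derive (t : R) :
  is_derive t 1 logistic (logistic t * (1 - logistic t)).
Proof.
have hD : 1 + expR (- t) != 0 by rewrite gt_eqF // ltr_pwDl // expR_gt0.
have dE : is_derive t 1 (expR \o -%R) (expR (- t) * -1).
  exact: is_derive1_comp.
have dV := @is_deriveV R (cst 1 + (expR \o -%R)) t _ _ hD
  (is_deriveD (is_derive_cst (1 : R) t 1) dE).
apply: is_derive_eq dV _; rewrite /logistic /GRing.scale /=.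
move: hD; set e := expR (- t) => hD.
change (- (1 + e) ^- 2 * (0 + e * -1) = (1 + e)^-1 * (1 - (1 + e)^-1)).
by field.
Qed.

Lemma logistic_continuous : continuous logistic.
Proof.
move=> t; have [+ _] := logistic_derive t.
by move=> /derivable1_diffP /differentiable_continuous.
Qed.

Lemma logistic_le (u w : R) : u <= w -> logistic u <= logistic w.
Proof.
move=> uw; rewrite /logistic lef_pV2 ?posrE ?ltr_pwDl ?expR_gt0 //.
by rewrite lerD2l ler_expR lerN2.
Qed.

(* Up to an increasing affine change, the harvesting Lagrangian. *)
Definition tilted_logistic (m t : R) : R := logistic t - m * t.

Lemma tilted_logistic_derive (m t : R) :
  is_derive t 1 (tilted_logistic m) (logistic t * (1 - logistic t) - m).
Proof.
have dZ : is_derive t 1 (m \*: id) (m *: 1) := is_deriveZ m (is_derive_id t 1).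
apply: is_derive_eq (is_deriveB (logistic_derive t) dZ) _.
by rewrite /GRing.scale /= mulr1.
Qed.

Lemma tilted_logistic_continuous (m : R) : continuous (tilted_logistic m).
Proof.
move=> t; have [+ _] := tilted_logistic_derive m t.
by move=> /derivable1_diffP /differentiable_continuous.
Qed.

Lemma tilted_logistic_derive1 (m t : R) :
  derive1 (tilted_logistic m) t = logistic t * (1 - logistic t) - m.
Proof. by rewrite derive1E; have [_ ->] := tilted_logistic_derive m t. Qed.

Lemma tilted_logistic_le (m u w : R) : u <= w ->
  (forall t, u < t < w -> m <= logistic t * (1 - logistic t)) ->
  tilted_logistic m u <= tilted_logistic m w.
Proof.
move=> uw Hd.
have mono : {in `[u, w] &, {homo tilted_logistic m : x y / x <= y}}.
  apply: ger0_derive1_le_cc.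
  - by move=> t _; case: (tilted_logistic_derive m t).
  - by move=> t; rewrite in_itv tilted_logistic_derive1 subr_ge0 => /Hd.
  - by apply: continuous_subspaceT; apply: tilted_logistic_continuous.
by apply: mono; rewrite ?in_itv /= ?lexx ?uw.
Qed.

Lemma tilted_logistic_ge (m u w : R) : u <= w ->
  (forall t, u < t < w -> logistic t * (1 - logistic t) <= m) ->
  tilted_logistic m w <= tilted_logistic m u.
Proof.
move=> uw Hd.
have mono : {in `[u, w] &, {homo tilted_logistic m : x y /~ x <= y}}.
  apply: ler0_derive1_le_cc.
  - by move=> t _; case: (tilted_logistic_derive m t).
  - by move=> t; rewrite in_itv tilted_logistic_derive1 subr_le0 => /Hd.
  - by apply: continuous_subspaceT; apply: tilted_logistic_continuous.
by apply: mono; rewrite ?in_itv /= ?lexx ?uw.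
Qed.

Lemma tilted_logistic_nincr_quarter (m u w : R) : 1/4 <= m -> u <= w ->
  tilted_logistic m w <= tilted_logistic m u.
Proof.
move=> hm uw; apply: tilted_logistic_ge => // t _.
have := sqr_ge0 (logistic t - 1/2); nra.
Qed.

(* For [m = (1 - s^2)/4] the derivative [l (1 - l) - m], [l = logistic t], is
   nonnegative exactly when [(1 - s)/2 <= l <= (1 + s)/2], so [tp], where
   [l = (1 + s)/2], is the local maximum. *)
Lemma tilted_logistic_le_peak {m s tp : R} (u w : R) :
  0 <= s -> m = (1 - s^+2)/4 -> logistic tp = (1 + s)/2 ->
  u <= w -> w <= tp -> (1 - s)/2 <= logistic u ->
  tilted_logistic m u <= tilted_logistic m w.
Proof.
move=> s_ge0 m_s logistic_tp uw wtp hu; apply: tilted_logistic_le => // t /andP[ut tw].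
have h1 : logistic u <= logistic t by apply/logistic_le/ltW.
have h2 : logistic t <= (1 + s)/2.
  by rewrite -logistic_tp; apply/logistic_le/ltW/(lt_le_trans tw).
rewrite m_s; nra.
Qed.

Lemma tilted_logistic_le_max {m s tp : R} (t0 t : R) :
  0 <= s -> m = (1 - s^+2)/4 -> logistic tp = (1 + s)/2 -> t0 <= t ->
  tilted_logistic m t <= Num.max (tilted_logistic m t0) (tilted_logistic m tp).
Proof.
move=> s_ge0 m_s logistic_tp t0t; rewrite le_max; apply/orP.
have [tpt|ttp] := lerP tp t.
  right; apply: tilted_logistic_ge => // z /andP[tz _].
  have : (1 + s)/2 <= logistic z by rewrite -logistic_tp; apply/logistic_le/ltW.
  move=> lz; have : 0 <= (logistic z - (1 + s)/2) * (logistic z - (1 - s)/2).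
    by apply: mulr_ge0; lra.
  rewrite m_s; nra.
have [lt_small|lt_big] := lerP (logistic t) ((1 - s)/2).
  left; apply: tilted_logistic_ge => // z /andP[_ zt].
  have : logistic z <= (1 - s)/2 by apply/(le_trans _ lt_small)/logistic_le/ltW.
  move=> lz; have : 0 <= (logistic z - (1 + s)/2) * (logistic z - (1 - s)/2).
    by apply: mulr_le0; lra.
  rewrite m_s; nra.
by right; apply: (tilted_logistic_le_peak _ _ s_ge0 m_s logistic_tp); rewrite ?lexx ?ltW.
Qed.

End logistic.

Section pointwise_lagrangian.
Context {R : realType}.

Lemma Omg_bounds (a b : R) : 0 < a -> 0 < b -> 0 < Omg a b < 1/2.
Proof.
move=> a0 b0; rewrite /Omg.
have e1 : 1 < expR (a * b) by rewrite expR_gt1 mulr_gt0.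
rewrite invr_gt0 (_ : 1/2 = 2^-1) ?mul1r // ltf_pV2 ?posrE; lra.
Qed.

Lemma Psi_logistic (a b x p rho : R) :
  Psi a b x p rho = logistic (a * (x * (rho * p) - b)).
Proof. by rewrite /Psi /logistic; congr ((1 + expR (- (a * (_ - b))))^-1); ring. Qed.

Lemma logistic_Omg (a b x : R) : logistic (a * (x * 0 - b)) = Omg a b.
Proof. by rewrite /logistic /Omg mulr0 sub0r mulrN opprK. Qed.

Lemma QNL0 (a b Ps T x : R) : QNL a b Ps T x 0 1 = 0.
Proof. by rewrite /QNL Psi_logistic mulr0 logistic_Omg subrr mulr0 mul0r. Qed.

Lemma rate_split (s2 x p rho : R) : rate s2 x p rho = rate s2 x ((1 - rho) * p) 0.
Proof. by rewrite /rate; congr (ln (1 + _ / s2)); ring. Qed.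

Lemma QNL_split (a b Ps T x p rho : R) :
  QNL a b Ps T x p rho = QNL a b Ps T x (rho * p) 1.
Proof. by rewrite /QNL !Psi_logistic mul1r. Qed.

Lemma rate_ge0 (s2 x p rho : R) : 0 < s2 -> 0 <= x -> 0 <= p -> rho <= 1 ->
  0 <= rate s2 x p rho.
Proof.
move=> s0 x0 p0 r1; rewrite /rate; apply: ln_ge0.
by rewrite lerDl divr_ge0 ?mulr_ge0 ?subr_ge0 // ltW.
Qed.

Lemma QNL_ge0 (a b Ps T x p rho : R) : 0 < a -> 0 < b -> 0 < Ps -> 0 < T ->
  0 <= x -> 0 <= p -> 0 <= rho -> 0 <= QNL a b Ps T x p rho.
Proof.
move=> a0 b0 P0 T0 x0 p0 r0.
have /andP[_ Ol] := Omg_bounds a b a0 b0.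
rewrite /QNL Psi_logistic; apply: divr_ge0; last lra.
apply: mulr_ge0; first by rewrite mulr_ge0 // ltW.
rewrite subr_ge0 -(logistic_Omg a b x); apply: logistic_le.
by rewrite ler_pM2l // lerD2r mulr0 !mulr_ge0.
Qed.

Lemma PID_ge0 (s2 mu x : R) : 0 <= PID s2 mu x.
Proof. by rewrite /PID le_max lexx orbT. Qed.

Lemma ID_lagrangian_opt (s2 mu x u : R) : 0 < s2 -> 0 < mu -> 0 < x -> 0 <= u ->
  rate s2 x u 0 - mu * u <= rate s2 x (PID s2 mu x) 0 - mu * PID s2 mu x.
Proof.
move=> s0 m0 x0 u0; rewrite /rate subr0 !mul1r.
have PID0 := PID_ge0 s2 mu x.
set B := 1 + x * PID s2 mu x / s2; set A := 1 + x * u / s2.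
have B0 : 0 < B by rewrite /B ltr_pwDl // divr_ge0 ?mulr_ge0 // ltW.
have A0 : 0 < A by rewrite /A ltr_pwDl // divr_ge0 ?mulr_ge0 // ltW.
have concavity : ln A - ln B <= A / B - 1.
  rewrite -ln_div ?posrE // -[X in ln X](addrNK 1) addrC.
  by apply: le_ln1Dx; rewrite ltrBrDl addrC addNr divr_gt0.
(* The tangent to [ln] at [B] has slope [x / (s2 B) <= mu], with equality when
   [PID > 0]. *)
suff : A / B - 1 <= mu * (u - PID s2 mu x) by lra.
move: B0; rewrite /B.
have [hc _|hc B0] := leP (mu^-1 - s2 / x) 0.
  have -> : PID s2 mu x = 0 by apply/max_idPr.
  rewrite !mulr0 mul0r addr0 divr1 subr0 /A addrC addKr mulrAC.
  apply: ler_wpM2r => //.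
  have : mu^-1 <= s2 / x by lra.
  by rewrite -(invf_div x s2) lef_pV2 ?posrE ?divr_gt0.
have -> : PID s2 mu x = mu^-1 - s2 / x by apply/max_idPl/ltW.
rewrite /A le_eqVlt; apply/orP; left; apply/eqP.
by field; rewrite !gt_eqF.
Qed.

Definition EH_lagrangian (a b Ps T lam mu x v : R) : R :=
  lam * QNL a b Ps T x v 1 - mu * v.

Definition EH_gain (a b Ps T lam : R) : R := lam * Ps * T / (1 - Omg a b).

(* [mu Z(h) / lam] in the paper; [x1] is the gain at which it equals [1/4]. *)
Definition tilt (a b Ps T lam mu x : R) : R := mu * Zf a b Ps T x / lam.

Section harvesting.
Variables (a b Ps T lam mu x : R).
Hypotheses (a0 : 0 < a) (b0 : 0 < b) (Ps0 : 0 < Ps) (T0 : 0 < T) (lam0 : 0 < lam)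
  (mu0 : 0 < mu) (x0 : 0 < x).

Let L := EH_lagrangian a b Ps T lam mu x.
Let m := tilt a b Ps T lam mu x.
Let s : R := Num.sqrt (1 - 4 * m).
Let logit v := a * (x * v - b).

Lemma EH_gain_gt0 : 0 < EH_gain a b Ps T lam.
Proof.
have /andP[_ Ol] := Omg_bounds a b a0 b0.
by rewrite /EH_gain divr_gt0 ?mulr_gt0 //; lra.
Qed.

Lemma EH_lagrangian_tilted (v : R) :
  L v = EH_gain a b Ps T lam * tilted_logistic m (logit v)
        - (EH_gain a b Ps T lam * Omg a b + mu * b / x).
Proof.
have /andP[Om0 Ol] := Omg_bounds a b a0 b0.
rewrite /L /EH_lagrangian /QNL Psi_logistic mul1r /EH_gain /tilted_logistic /m /tilt /Zf /logit.
set S := logistic _.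
by field; rewrite !gt_eqF // ?subr_gt0; lra.
Qed.

Lemma EH_lagrangian_le (v w : R) :
  (L v <= L w) = (tilted_logistic m (logit v) <= tilted_logistic m (logit w)).
Proof. by rewrite !EH_lagrangian_tilted lerD2r ler_pM2l // EH_gain_gt0. Qed.

Lemma EH_lagrangian0 : L 0 = 0.
Proof. by rewrite /L /EH_lagrangian QNL0 !mulr0 subr0. Qed.

Lemma tilt_gt0 : 0 < m.
Proof.
have /andP[_ Ol] := Omg_bounds a b a0 b0.
rewrite /m /tilt /Zf divr_gt0 // mulr_gt0 // divr_gt0 ?mulr_gt0 //; lra.
Qed.

Lemma tilt_x1 : 4 * m * x = x1 a b Ps T lam mu.
Proof.
have /andP[_ Ol] := Omg_bounds a b a0 b0.
by rewrite /m /tilt /Zf /x1; field; rewrite !gt_eqF.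
Qed.

Lemma tilt_x2 : m * x = Omg a b * (1 - Omg a b) * x2 a b Ps T lam mu.
Proof.
have /andP[Om0 Ol] := Omg_bounds a b a0 b0.
by rewrite /m /tilt /Zf /x2; field; rewrite !gt_eqF //; lra.
Qed.

Lemma tilt_sqrt_lt1 : s < 1.
Proof.
have mp := tilt_gt0; have s0 : 0 <= s := sqrtr_ge0 _.
have [h|h] := lerP 0 (1 - 4 * m); last by rewrite /s ltr0_sqrtr.
by have := sqr_sqrtr h; rewrite -/s; nra.
Qed.

Lemma tilt_sqrtE : m <= 1/4 -> m = (1 - s^+2)/4.
Proof. by move=> hm; rewrite /s sqr_sqrtr; lra. Qed.

Lemma Zf_tilt : 1 - 4 * mu * Zf a b Ps T x / lam = 1 - 4 * m.
Proof. by rewrite /m /tilt; ring. Qed.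

Lemma logit_le {v w : R} : v <= w -> logit v <= logit w.
Proof. by move=> vw; rewrite ler_pM2l // lerD2r ler_pM2l. Qed.

(* [PA] is the interior local maximum of [L]. *)
Lemma logistic_PA : logistic (logit (PA a b Ps T lam mu x)) = (1 + s)/2.
Proof.
have s0 : 0 <= s := sqrtr_ge0 _; have s1 := tilt_sqrt_lt1.
have -> : logit (PA a b Ps T lam mu x) = - ln ((1 - s) / (1 + s)).
  rewrite /logit /PA Zf_tilt -/s (_ : 2 / (1 + s) - 1 = (1 - s) / (1 + s)); last first.
    by field; lra.
  by field; rewrite !gt_eqF.
rewrite /logistic opprK lnK ?posrE ?divr_gt0 //; try lra.
by field; lra.
Qed.

Lemma PA_gt0 : 0 < PA a b Ps T lam mu x.
Proof.
have s0 : 0 <= s := sqrtr_ge0 _.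
rewrite /PA Zf_tilt -/s mulr_gt0 ?invr_gt0 // ltr_wpDl // mulNr -mulrN.
apply: mulr_ge0; first by rewrite invr_ge0 ltW.
rewrite oppr_ge0; apply: ln_le0.
by rewrite lerBlDr ler_pdivrMr; lra.
Qed.

Lemma EH_lagrangian_le0 (v : R) : x <= x1 a b Ps T lam mu -> 0 <= v -> L v <= L 0.
Proof.
move=> hx v0; rewrite EH_lagrangian_le; apply: tilted_logistic_nincr_quarter.
  by move: hx; rewrite -tilt_x1 -[X in X <= _]mul1r ler_pM2r //; lra.
exact: logit_le.
Qed.

Lemma EH_lagrangian_le_max (v : R) : x1 a b Ps T lam mu < x -> 0 <= v ->
  L v <= Num.max (L 0) (L (PA a b Ps T lam mu x)).
Proof.
move=> hx v0.
have m_lt : m < 1/4.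
  by move: hx; rewrite -tilt_x1 -[X in _ < X]mul1r ltr_pM2r //; lra.
rewrite le_max !EH_lagrangian_le -le_max.
exact: (tilted_logistic_le_max _ _ (sqrtr_ge0 _) (tilt_sqrtE (ltW m_lt)) logistic_PA
  (logit_le v0)).
Qed.

(* For [x >= x2], [m <= Omega (1 - Omega)]: zero power already lies where [L]
   increases up to [PA]. *)
Lemma EH_lagrangian0_le_PA : x2 a b Ps T lam mu <= x -> L 0 <= L (PA a b Ps T lam mu x).
Proof.
move=> hx; have /andP[Om0 Ol] := Omg_bounds a b a0 b0.
have s0 : 0 <= s := sqrtr_ge0 _.
have m_le : m <= Omg a b * (1 - Omg a b).
  have O1 : 0 < Omg a b * (1 - Omg a b) by apply: mulr_gt0; lra.
  have : m * x <= Omg a b * (1 - Omg a b) * x by rewrite tilt_x2 ler_pM2l.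
  by rewrite ler_pM2r.
have m_s : m = (1 - s^+2)/4 by apply: tilt_sqrtE; nra.
rewrite EH_lagrangian_le.
apply: (tilted_logistic_le_peak _ _ s0 m_s logistic_PA); rewrite ?lexx //.
- by apply: logit_le; apply/ltW/PA_gt0.
- by rewrite /logit logistic_Omg; rewrite m_s in m_le; nra.
Qed.

Lemma EH_lagrangian_opt (v : R) : 0 <= v -> L v <= L (PEH a b Ps T lam mu x).
Proof.
move=> v0; rewrite /PEH; case: ifP => [hx1|/negbT]; first exact: EH_lagrangian_le0.
rewrite -ltNge => hx1; apply: (le_trans (EH_lagrangian_le_max v hx1 v0)).
case: ifP => [_|/negbT]; last first.
  by rewrite -leNgt ge_max lexx andbT => /EH_lagrangian0_le_PA.
case: ifP => [/ltW|/negbT]; rewrite ge_max EH_lagrangian0 lexx ?andbT /L /EH_lagrangian.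
  by rewrite subr_ge0.
by rewrite subr_le0 leNgt.
Qed.

End harvesting.

Section candidate.
Variables (a b Ps T s2 lam mu x : R).
Hypotheses (a0 : 0 < a) (b0 : 0 < b) (Ps0 : 0 < Ps) (T0 : 0 < T) (s20 : 0 < s2)
  (lam0 : 0 < lam) (mu0 : 0 < mu) (x0 : 0 < x).

Let Pc := Pcand a b Ps T s2 lam mu x.
Let rc := rhocand a b Ps T s2 lam mu x.

Lemma PEH_ge0 : 0 <= PEH a b Ps T lam mu x.
Proof. by have := ltW (PA_gt0 a b Ps T lam mu x a0 b0 x0); rewrite /PEH; repeat case: ifP. Qed.

Lemma Pcand_ge0 : 0 <= Pc.
Proof. by rewrite addr_ge0 ?PID_ge0 ?PEH_ge0. Qed.

Lemma rhocand_bounds : 0 <= rc <= 1.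
Proof.
rewrite /rc /rhocand -/Pc; case: ifP => [_|/negbT Pc_neq0]; first by rewrite lexx ler01.
have Pc_gt0 : 0 < Pc by rewrite lt_def Pc_neq0 Pcand_ge0.
rewrite divr_ge0 ?PEH_ge0 ?(ltW Pc_gt0) //= ler_pdivrMr // mul1r /Pc /Pcand.
by have := PID_ge0 s2 mu x; lra.
Qed.

(* When [Pcand = 0], [rhocand] is [0] by convention and both parts vanish. *)
Lemma Pcand_split : (1 - rc) * Pc = PID s2 mu x /\ rc * Pc = PEH a b Ps T lam mu x.
Proof.
have := PID_ge0 s2 mu x; have := PEH_ge0.
rewrite /rc /rhocand -/Pc; case: ifP => [/eqP Pc0|/negbT Pc_neq0] h1 h2.
  by rewrite Pc0 !mulr0; move: Pc0; rewrite /Pc /Pcand; split; lra.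
by rewrite mulrBl mul1r divfK //; split=> //; rewrite /Pc /Pcand; ring.
Qed.

Lemma lagrangian_le_candidate (p rho : R) : 0 <= p -> 0 <= rho <= 1 ->
  rate s2 x p rho + lam * QNL a b Ps T x p rho + mu * Pc <=
  rate s2 x Pc rc + lam * QNL a b Ps T x Pc rc + mu * p.
Proof.
move=> p0 /andP[r0 r1].
rewrite (rate_split _ _ p) (QNL_split _ _ _ _ _ p) (rate_split _ _ Pc) (QNL_split _ _ _ _ _ Pc).
have [-> ->] := Pcand_split.
have r1' : 0 <= 1 - rho by rewrite subr_ge0.
have := ID_lagrangian_opt _ _ _ _ s20 mu0 x0 (mulr_ge0 r1' p0).
have := EH_lagrangian_opt a b Ps T lam mu x a0 b0 Ps0 T0 lam0 mu0 x0 _ (mulr_ge0 r0 p0).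
rewrite /EH_lagrangian /Pc /Pcand.
lra.
Qed.

End candidate.

End pointwise_lagrangian.

Section measurability.
Context {R : realType}.

Lemma measurable_inv : measurable_fun [set: R] GRing.inv.
Proof.
have -> : GRing.inv = (fun x : R => if x == 0 then 0 else x^-1).
  by apply/funext => x; case: eqP => // ->; rewrite invr0.
apply: measurable_fun_if => //; first exact: measurable_fun_eqr.
rewrite setTI.
have -> : (fun x : R => x == 0) @^-1` [set false] = [set x | x != 0].
  by apply/seteqP; split => x /=; case: (x == 0).
apply: open_continuous_measurable_fun; first exact: open_neq.
by move=> x; rewrite inE; apply: inv_continuous.
Qed.

Lemma measurable_logistic : measurable_fun [set: R] logistic.
Proof. exact: continuous_measurable_fun logistic_continuous. Qed.

Lemma measurable_sqrt : measurable_fun [set: R] Num.sqrt.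
Proof. by apply: continuous_measurable_fun; exact: sqrt_continuous. Qed.

End measurability.

Ltac solve_measurable :=
  repeat first [ assumption | exact: measurable_cst | exact: measurable_id
  | apply: (measurableT_comp (@measurable_logistic _))
  | apply: measurable_funD | apply: measurable_funB | apply: measurable_funM
  | apply: measurable_funN | apply: measurable_maxr | apply: measurable_fun_ifT
  | apply: measurable_fun_ler | apply: measurable_fun_ltr | apply: measurable_fun_eqr
  | apply: (measurableT_comp (@measurable_inv _)) | apply: (measurableT_comp (@measurable_ln _))
  | apply: (measurableT_comp (@measurable_sqrt _)) ].

Section measurable_integrands.
Context {R : realType} {d : measure_display} {X : measurableType d}.
Variables (fx fp fr : X -> R).
Hypotheses (mx : measurable_fun setT fx) (mp : measurable_fun setT fp)
  (mr : measurable_fun setT fr).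

Lemma measurable_rate (s2 : R) :
  measurable_fun setT (fun w => rate s2 (fx w) (fp w) (fr w)).
Proof. rewrite /rate; solve_measurable. Qed.

Lemma measurable_QNL (a b Ps T : R) :
  measurable_fun setT (fun w => QNL a b Ps T (fx w) (fp w) (fr w)).
Proof. rewrite /QNL; under eq_fun do rewrite Psi_logistic; solve_measurable. Qed.

End measurable_integrands.

Arguments measurable_rate {R d X fx fp fr}.
Arguments measurable_QNL {R d X fx fp fr}.

Section measurable_candidate.
Context {R : realType}.
Variables (a b Ps T s2 lam mu : R).

Lemma measurable_PID : measurable_fun [set: R] (PID s2 mu).
Proof. rewrite /PID; solve_measurable. Qed.

Lemma measurable_PA : measurable_fun [set: R] (PA a b Ps T lam mu).
Proof. rewrite /PA /Zf; solve_measurable. Qed.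

Lemma measurable_PEH : measurable_fun [set: R] (PEH a b Ps T lam mu).
Proof.
have mPA := measurable_PA.
have mQ := measurable_QNL (@measurable_id _ R setT) mPA (measurable_cst (1 : R)) a b Ps T.
rewrite /PEH; solve_measurable.
Qed.

Lemma measurable_Pcand : measurable_fun [set: R] (Pcand a b Ps T s2 lam mu).
Proof. exact: measurable_funD measurable_PID measurable_PEH. Qed.

Lemma measurable_rhocand : measurable_fun [set: R] (rhocand a b Ps T s2 lam mu).
Proof.
have mPEH := measurable_PEH; have mPc := measurable_Pcand.
rewrite /rhocand; solve_measurable.
Qed.

End measurable_candidate.

Section lagrangian_duality.
Context {R : realType} {d : measure_display} {X : measurableType d}.
Variable (m : {measure set X -> \bar R}).

Definition nonneg_measurable (f : X -> R) : Prop :=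
  measurable_fun setT f /\ forall x, 0 <= f x.

Lemma nonneg_measurableD {f g : X -> R} : nonneg_measurable f -> nonneg_measurable g ->
  nonneg_measurable (fun x => f x + g x).
Proof.
by move=> [mf f0] [mg g0]; split=> [|x]; [exact: measurable_funD | exact: addr_ge0].
Qed.

Lemma nonneg_measurableZ {c : R} {f : X -> R} : 0 <= c -> nonneg_measurable f ->
  nonneg_measurable (fun x => c * f x).
Proof.
move=> c0 [mf f0]; split=> [|x]; last exact: mulr_ge0.
by apply: measurable_funM => //; exact: measurable_cst.
Qed.

Lemma integral_nonnegD (f g : X -> R) : nonneg_measurable f -> nonneg_measurable g ->
  (\int[m]_x (f x + g x)%:E = \int[m]_x (f x)%:E + \int[m]_x (g x)%:E)%E.
Proof.
move=> [mf f0] [mg g0]; under eq_integral do rewrite EFinD.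
apply: ge0_integralD => //; do ?[by move=> x _; rewrite lee_fin];
  exact: measurableT_comp.
Qed.

Lemma integral_nonnegZ (c : R) (f : X -> R) : 0 <= c -> nonneg_measurable f ->
  (\int[m]_x (c * f x)%:E = c%:E * \int[m]_x (f x)%:E)%E.
Proof.
move=> c0 [mf f0]; under eq_integral do rewrite EFinM.
apply: ge0_integralZl_EFin => //; first by move=> x _; rewrite lee_fin.
exact: measurableT_comp.
Qed.

Lemma integral_nonneg_lin (c1 c2 : R) (f g k : X -> R) : 0 <= c1 -> 0 <= c2 ->
  nonneg_measurable f -> nonneg_measurable g -> nonneg_measurable k ->
  (\int[m]_x (f x + c1 * g x + c2 * k x)%:E =
   \int[m]_x (f x)%:E + c1%:E * \int[m]_x (g x)%:E + c2%:E * \int[m]_x (k x)%:E)%E.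
Proof.
move=> c10 c20 hf hg hk.
have hg1 := nonneg_measurableZ c10 hg; have hk2 := nonneg_measurableZ c20 hk.
rewrite integral_nonnegD ?integral_nonnegD ?integral_nonnegZ //.
exact: nonneg_measurableD.
Qed.

Lemma integral_le_of_lagrangian {r q pc rc qc pp : X -> R} {lam mu Q Pavg : R} :
  0 <= lam -> 0 <= mu ->
  nonneg_measurable r -> nonneg_measurable q -> nonneg_measurable pc ->
  nonneg_measurable rc -> nonneg_measurable qc -> nonneg_measurable pp ->
  (forall x, r x + lam * q x + mu * pc x <= rc x + lam * qc x + mu * pp x) ->
  (Q%:E <= \int[m]_x (q x)%:E)%E -> (\int[m]_x (qc x)%:E = Q%:E)%E ->
  (\int[m]_x (pc x)%:E = Pavg%:E)%E -> (\int[m]_x (pp x)%:E <= Pavg%:E)%E ->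
  (\int[m]_x (r x)%:E <= \int[m]_x (rc x)%:E)%E.
Proof.
move=> lam0 mu0 hr hq hpc hrc hqc hpp H Iq Iqc Ipc Ipp.
have lin (f g k : X -> R) : nonneg_measurable f -> nonneg_measurable g ->
    nonneg_measurable k -> nonneg_measurable (fun x => f x + lam * g x + mu * k x).
  move=> hf hg hk.
  by do 2?apply: nonneg_measurableD => //; apply: nonneg_measurableZ.
have hL : (\int[m]_x (r x + lam * q x + mu * pc x)%:E <=
           \int[m]_x (rc x + lam * qc x + mu * pp x)%:E)%E.
  apply: ge0_le_integral => //; first by move=> x _; rewrite lee_fin (lin _ _ _ hr hq hpc).2.
  - exact/measurableT_comp/(lin _ _ _ hr hq hpc).1.
  - exact/measurableT_comp/(lin _ _ _ hrc hqc hpp).1.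
  - by move=> x _; rewrite lee_fin.
rewrite !integral_nonneg_lin // Iqc Ipc in hL.
have Iq_lam : (lam%:E * Q%:E <= lam%:E * \int[m]_x (q x)%:E)%E.
  by apply: lee_wpmul2l; rewrite ?lee_fin.
have Ipp_mu : (mu%:E * \int[m]_x (pp x)%:E <= mu%:E * Pavg%:E)%E.
  by apply: lee_wpmul2l; rewrite ?lee_fin.
rewrite -(leeD2rE _ _ (fin_numD (lam%:E * Q%:E) (mu%:E * Pavg%:E))) ?fin_numM //.
rewrite !addeA; apply: le_trans (le_trans hL _).
  by apply: leeD2r; apply: leeD2l.
by apply: leeD2l.
Qed.

End lagrangian_duality.

Section fading_policies.
Context {R : realType} {d : measure_display} {Ox : measurableType d}.
Implicit Types (P : probability Ox R) (h U : Ox -> R) (p rho : R * R -> R).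

Lemma feasible_integrands {P h U} {a b Ps T Pavg Q : R} (s2 : R) {p rho} :
  0 < a -> 0 < b -> 0 < Ps -> 0 < T -> 0 < s2 -> fading_model P h U ->
  feasible a b Ps T Pavg Q P h U p rho ->
  [/\ nonneg_measurable (fun w => rate s2 (h w) (p (h w, U w)) (rho (h w, U w))),
      nonneg_measurable (fun w => QNL a b Ps T (h w) (p (h w, U w)) (rho (h w, U w))) &
      nonneg_measurable (fun w => p (h w, U w))].
Proof.
move=> a0 b0 Ps0 T0 s20 [mh mU hpos _ _] [[mp mrho] p0 rho01 _ _].
have mhU : measurable_fun setT (fun w => (h w, U w)) by exact: measurable_fun_pair.
have mpw := measurableT_comp mp mhU; have mrhow := measurableT_comp mrho mhU.
split; split=> [|w].
- exact: measurable_rate.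
- by apply: rate_ge0 => //; [exact: ltW | case/andP: (rho01 w)].
- exact: measurable_QNL.
- by apply: QNL_ge0 => //; [exact: ltW | case/andP: (rho01 w)].
- exact: mpw.
- exact: p0.
Qed.

Lemma candidate_feasible {P h U} {a b Ps T Pavg Q : R} (s2 lam mu : R) :
  0 < a -> 0 < b -> fading_model P h U ->
  (Q%:E <= Efad P h U (fun s => QNL a b Ps T s.1 (Pcand a b Ps T s2 lam mu s.1)
                                            (rhocand a b Ps T s2 lam mu s.1)))%E ->
  (Efad P h U (fun s => Pcand a b Ps T s2 lam mu s.1) <= Pavg%:E)%E ->
  feasible a b Ps T Pavg Q P h U (fun s => Pcand a b Ps T s2 lam mu s.1)
                                 (fun s => rhocand a b Ps T s2 lam mu s.1).
Proof.
move=> a0 b0 [_ _ hpos _ _] EQ EP; split=> //.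
- split; apply: measurableT_comp measurable_fst;
    [exact: measurable_Pcand | exact: measurable_rhocand].
- by move=> w /=; apply: Pcand_ge0.
- by move=> w /=; apply: rhocand_bounds.
Qed.

End fading_policies.

Theorem lemma5 (R : realType) (d : measure_display) (Ox : measurableType d)
    (P : probability Ox R) (h U : Ox -> R)
    (a b Ps T sigma2 Pavg Q lam mu : R) :
  0 < a -> 0 < b -> 0 < Ps -> 0 < T -> 0 < sigma2 -> 0 < Pavg -> 0 <= Q ->
  fading_model P h U ->
  (exists p rho, feasible a b Ps T Pavg Q P h U p rho) ->
  0 < lam -> 0 < mu ->
  Efad P h U (fun s => QNL a b Ps T s.1 (Pcand a b Ps T sigma2 lam mu s.1)
                                      (rhocand a b Ps T sigma2 lam mu s.1)) = Q%:E ->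
  Efad P h U (fun s => Pcand a b Ps T sigma2 lam mu s.1) = Pavg%:E ->
  feasible a b Ps T Pavg Q P h U (fun s => Pcand a b Ps T sigma2 lam mu s.1)
                                 (fun s => rhocand a b Ps T sigma2 lam mu s.1) /\
  forall p rho : R * R -> R, feasible a b Ps T Pavg Q P h U p rho ->
    (Efad P h U (fun s => rate sigma2 s.1 (p s) (rho s)) <=
     Efad P h U (fun s => rate sigma2 s.1 (Pcand a b Ps T sigma2 lam mu s.1)
                                          (rhocand a b Ps T sigma2 lam mu s.1)))%E.
Proof.
move=> a0 b0 Ps0 T0 s20 _ _ fading _ lam0 mu0 EQ EP.
have cand : feasible a b Ps T Pavg Q P h U (fun s => Pcand a b Ps T sigma2 lam mu s.1)
                                          (fun s => rhocand a b Ps T sigma2 lam mu s.1).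
  by apply: candidate_feasible => //; rewrite ?EQ ?EP.
split=> // p rho feas.
have [rp qp pp] := feasible_integrands sigma2 a0 b0 Ps0 T0 s20 fading feas.
have [rc qc pc] := feasible_integrands sigma2 a0 b0 Ps0 T0 s20 fading cand.
case: feas fading => _ p0 rho01 Eq Ep [_ _ hpos _ _].
rewrite /Efad /= in Eq Ep EQ EP *.
apply: (integral_le_of_lagrangian P (ltW lam0) (ltW mu0) rp qp pc rc qc pp _ Eq EQ EP Ep) => w.
exact: lagrangian_le_candidate.
Qed.
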